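(* Let $H$ be a bigraph. Then $H$ is a cocomparability bigraph if and only if $H^{++}$ is a strong cocomparability graph.
   Context: A bigraph is a bipartite graph with fixed colour classes $X,Y$. The Slash matrix is the $2\times2$ matrix with rows $(0,1)$ and $(1,0)$; a matrix contains it as a submatrix if there are rows $i<j$ and columns $k<l$ with entries $(i,k)=0$, $(i,l)=1$, $(j,k)=1$, $(j,l)=0$. A bigraph is a cocomparability bigraph if its biadjacency matrix (rows indexed by $X$, columns by $Y$) admits independent permutations of rows and of columns yielding a matrix not containing the Slash matrix as a submatrix. A reflexive graph (every vertex carries a loop) is a strong cocomparability graph if its adjacency matrix (1's on the diagonal) admits a simultaneous row-and-column permutation not containing the Slash matrix as a submatrix. For a bigraph $H$, $H^{++}$ is the reflexive graph obtained from $H$ by making each of the two colour classes a clique and adding a loop at every vertex. *)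

From mathcomp Require Import all_boot all_order all_algebra all_fingroup.
Set Implicit Arguments. Unset Strict Implicit. Unset Printing Implicit Defensive.

(* A bigraph H with colour classes X and Y is given by a relation E : X -> Y -> bool
   (E x y = true iff xy is an edge). *)

Definition contains_slash (m n : nat) (M : 'M[bool]_(m, n)) : Prop :=
  exists (i1 i2 : 'I_m) (k l : 'I_n),
    [/\ i1 < i2, k < l,
        M i1 k = false, M i1 l = true & M i2 k = true /\ M i2 l = false].

Definition biadj (X Y : finType) (E : X -> Y -> bool) : 'M[bool]_(#|X|, #|Y|) :=
  \matrix_(i < #|X|, j < #|Y|) E (enum_val i) (enum_val j).

Definition cocomparability_bigraph (X Y : finType) (E : X -> Y -> bool) : Prop :=
  exists (s : 'S_#|X|) (t : 'S_#|Y|),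
    ~ contains_slash (row_perm s (col_perm t (biadj E))).

Definition plusplus_adj (X Y : finType) (E : X -> Y -> bool) (u v : X + Y) : bool :=
  match u, v with
  | inl _, inl _ => true
  | inr _, inr _ => true
  | inl x, inr y => E x y
  | inr y, inl x => E x y
  end.

(* Adjacency matrix of a reflexive graph on a finite vertex type V (1's on the diagonal
   are part of adj, which must be reflexive). *)
Definition adjmx (V : finType) (adj : V -> V -> bool) : 'M[bool]_#|V| :=
  \matrix_(i < #|V|, j < #|V|) adj (enum_val i) (enum_val j).

Definition strong_cocomparability (V : finType) (adj : V -> V -> bool) : Prop :=
  exists s : 'S_#|V|, ~ contains_slash (row_perm s (col_perm s (adjmx adj))).

From mathcomp Require Import all_boot all_order all_algebra all_fingroup.
Set Implicit Arguments. Unset Strict Implicit. Unset Printing Implicit Defensive.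

(* A permutation of the rows (or columns) of a matrix indexed through [enum_val]
   is the same thing as a linear order on the underlying finite type, which we
   encode by an injective ranking [T -> nat].  Avoiding the Slash matrix then
   becomes a purely order-theoretic condition, [slash_free], on rankings of the
   rows and of the columns.

   For H^{++} the Slash pattern needs two
   non-edges, which only join the two colour classes; hence ranking all of X
   before all of Y turns slash-free rankings of H into one of H^{++}, and
   conversely the restriction of a slash-free ranking of H^{++} to X and to Y
   is slash-free for H. *)

Definition slash_free (R C : Type) (A : R -> C -> bool)
    (rr : R -> nat) (rc : C -> nat) : Prop :=
  forall r1 r2 c1 c2, rr r1 < rr r2 -> rc c1 < rc c2 ->
    ~ [/\ A r1 c1 = false, A r1 c2 = true, A r2 c1 = true & A r2 c2 = false].

Lemma slash_free_order (R C : Type) (A : R -> C -> bool)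
    (rr rr' : R -> nat) (rc rc' : C -> nat) :
  (forall a b, (rr' a < rr' b) = (rr a < rr b)) ->
  (forall a b, (rc' a < rc' b) = (rc a < rc b)) ->
  slash_free A rr rc -> slash_free A rr' rc'.
Proof.
by move=> Er Ec SF r1 r2 c1 c2; rewrite Er Ec; apply: SF.
Qed.

Section PermRank.

Variable T : finType.

(* The position of [x] in the enumeration of [T] reordered by [s]. *)
Definition perm_rank (s : 'S_#|T|) (x : T) : nat := s^-1%g (enum_rank x).

Lemma perm_rank_inj (s : 'S_#|T|) : injective (perm_rank s).
Proof. by move=> a b /val_inj /perm_inj /enum_rank_inj. Qed.

Lemma perm_rank_lt (s : 'S_#|T|) (x : T) : perm_rank s x < #|T|.
Proof. exact: ltn_ord. Qed.

Lemma perm_rank_enum (s : 'S_#|T|) (i : 'I_#|T|) : perm_rank s (enum_val (s i)) = i.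
Proof. by rewrite /perm_rank enum_valK permK. Qed.

Variable r : T -> nat.
Hypothesis r_inj : injective r.

(* The number of elements of smaller rank: an order-preserving compression of
   [r] into [0, #|T|). *)
Definition rank_below (x : T) : nat := #|[pred y | r y < r x]|.

Lemma rank_below_lt (x : T) : rank_below x < #|T|.
Proof.
apply: proper_card; apply/properP; split; first exact/subsetP.
by exists x; rewrite ?inE /= ?ltnn.
Qed.

Lemma rank_below_mono (x y : T) : r x < r y -> rank_below x < rank_below y.
Proof.
move=> lt_xy; apply: proper_card; apply/properP; split.
  by apply/subsetP => z; rewrite !inE /= => /ltn_trans; apply.
by exists x; rewrite !inE /= ?lt_xy ?ltnn.
Qed.

Lemma rank_below_ltE (x y : T) : (rank_below x < rank_below y) = (r x < r y).
Proof.
case: (ltngtP (r x) (r y)) => [lt_xy | lt_yx | /r_inj -> ]; last by rewrite ltnn.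
- exact: rank_below_mono.
- by apply/negbTE; rewrite -leqNgt ltnW // rank_below_mono.
Qed.

Definition rank_ord (x : T) : 'I_#|T| := Ordinal (rank_below_lt x).

Lemma rank_ord_enum_inj : injective (fun j : 'I_#|T| => rank_ord (enum_val j)).
Proof.
move=> i j /(congr1 val) /= eq_rk; apply: enum_val_inj; apply: r_inj.
by case: (ltngtP (r (enum_val i)) (r (enum_val j))) => // /rank_below_mono;
  rewrite eq_rk ltnn.
Qed.

Lemma perm_of_rank :
  exists s : 'S_#|T|, forall x y, (perm_rank s x < perm_rank s y) = (r x < r y).
Proof.
exists (perm rank_ord_enum_inj)^-1%g => x y.
by rewrite /perm_rank invgK !permE /= !enum_rankK rank_below_ltE.
Qed.

End PermRank.

Lemma slash_free_perm (R C : finType) (A : R -> C -> bool)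
    (s : 'S_#|R|) (t : 'S_#|C|) :
  ~ contains_slash (row_perm s (col_perm t (biadj A))) <->
  slash_free A (perm_rank s) (perm_rank t).
Proof.
split.
- move=> noslash r1 r2 c1 c2 lt_r lt_c pattern; apply: noslash.
  exists (s^-1%g (enum_rank r1)), (s^-1%g (enum_rank r2)),
    (t^-1%g (enum_rank c1)), (t^-1%g (enum_rank c2)).
  by case: pattern; rewrite !mxE !permKV !enum_rankK.
- move=> SF [i1 [i2 [k [l [lt_i lt_k e11 e12 [e21 e22]]]]]].
  move: e11 e12 e21 e22; rewrite !mxE => e11 e12 e21 e22.
  apply: (SF (enum_val (s i1)) (enum_val (s i2)) (enum_val (t k)) (enum_val (t l))).
  + by rewrite !perm_rank_enum.
  + by rewrite !perm_rank_enum.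
  + by split.
Qed.

Lemma cocomparability_of_rank (X Y : finType) (E : X -> Y -> bool)
    (rx : X -> nat) (ry : Y -> nat) :
  injective rx -> injective ry -> slash_free E rx ry -> cocomparability_bigraph E.
Proof.
move=> rx_inj ry_inj SF.
have [s Es] := perm_of_rank rx_inj; have [t Et] := perm_of_rank ry_inj.
by exists s, t; apply/slash_free_perm; apply: slash_free_order SF.
Qed.

Lemma strong_cocomparability_of_rank (V : finType) (adj : V -> V -> bool)
    (r : V -> nat) :
  injective r -> slash_free adj r r -> strong_cocomparability adj.
Proof.
move=> r_inj SF; have [s Es] := perm_of_rank r_inj.
by exists s; apply/slash_free_perm; apply: slash_free_order SF.
Qed.

Section PlusPlus.

Variables (X Y : finType) (E : X -> Y -> bool).

Definition join_rank (n : nat) (rx : X -> nat) (ry : Y -> nat) (u : X + Y) : nat :=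
  match u with inl x => rx x | inr y => n + ry y end.

Variables (n : nat) (rx : X -> nat) (ry : Y -> nat).
Hypothesis rx_bound : forall x, rx x < n.

Lemma join_rank_inj :
  injective rx -> injective ry -> injective (join_rank n rx ry).
Proof.
move=> rx_inj ry_inj [a|a] [b|b] /= eq_ab.
- by rewrite (rx_inj _ _ eq_ab).
- by move: (rx_bound a); rewrite eq_ab ltnNge leq_addr.
- by move: (rx_bound b); rewrite -eq_ab ltnNge leq_addr.
- by rewrite (ry_inj _ _ (addnI eq_ab)).
Qed.

Lemma join_rank_YX (y : Y) (x : X) :
  join_rank n rx ry (inr y) < join_rank n rx ry (inl x) = false.
Proof. by apply/negbTE; rewrite -leqNgt /= ltnW // (leq_trans (rx_bound x)) ?leq_addr. Qed.

(* A Slash pattern of H^{++} has its two non-edges across the colour classes,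
   so with X ranked before Y it is a Slash pattern of H or of its transpose. *)
Lemma plusplus_slash_free :
  slash_free E rx ry -> slash_free (plusplus_adj E) (join_rank n rx ry) (join_rank n rx ry).
Proof.
move=> SF u1 u2 v1 v2; rewrite /plusplus_adj.
case: u1 => [x1|y1]; case: u2 => [x2|y2]; case: v1 => [a1|b1]; case: v2 => [a2|b2];
  rewrite ?join_rank_YX //= ?ltn_add2l => lt_u lt_v [] //.
- by move=> e11 e12 e21 e22; apply: (SF x1 x2 b1 b2).
- by move=> e11 e12 e21 e22; apply: (SF a1 a2 y1 y2).
Qed.

Lemma plusplus_slash_free_restrict (r : X + Y -> nat) :
  slash_free (plusplus_adj E) r r -> slash_free E (r \o inl) (r \o inr).
Proof. by move=> SF x1 x2 y1 y2; apply: (SF (inl x1) (inl x2) (inr y1) (inr y2)). Qed.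

End PlusPlus.

Theorem theorem12 (X Y : finType) (E : X -> Y -> bool) :
  cocomparability_bigraph E <-> strong_cocomparability (plusplus_adj E).
Proof.
split.
- move=> [s [t /slash_free_perm SF]].
  apply: (@strong_cocomparability_of_rank _ _ (join_rank #|X| (perm_rank s) (perm_rank t))).
  + exact/join_rank_inj/perm_rank_inj/perm_rank_inj/perm_rank_lt.
  + exact/plusplus_slash_free/SF/perm_rank_lt.
- move=> [s /slash_free_perm SF].
  apply: (@cocomparability_of_rank _ _ _ (perm_rank s \o inl) (perm_rank s \o inr)).
  + by move=> a b /perm_rank_inj [].
  + by move=> a b /perm_rank_inj [].
  + exact: plusplus_slash_free_restrict.
Qed.
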